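(* Let $\mathcal{V}$ be a variety of algebras, $\mathcal{C}$ a full subcategory of the category of finitely generated free $\mathcal{V}$-algebras containing the free monogenic algebra $A_0$ on $x_0$, and $\Phi$ an automorphism of $\mathcal{C}$ with main function $(s^\Phi_A)$. Then there exists an element $\mathbf{t}(x_0)\in A_0$ (a term in the single variable $x_0$) such that for every $\mathcal{C}$-algebra $A$, $$s^\Phi_A(|A|)=\{\mathbf{t}(u)\mid u\in|\Phi(A)|\}.$$
   Context: Morphisms of $\mathcal{C}$ are all homomorphisms. For $a\in A$, $\alpha^A_a:A_0\to A$ is the homomorphism with $x_0\mapsto a$, and for $\mathbf{t}(x_0)\in A_0$ and $u$ in an algebra $B$, $\mathbf{t}(u):=\alpha^B_u(\mathbf{t}(x_0))$. Let $\eta^\Phi_0:\Phi^{-1}(A_0)\to A_0$ be the homomorphism sending every element of a fixed basis of $\Phi^{-1}(A_0)$ to $x_0$ (the identity if $\Phi(A_0)=A_0$), and $\eta^\Phi=\Phi(\eta^\Phi_0):A_0\to\Phi(A_0)$. The main function is $s^\Phi_A:|A|\to|\Phi(A)|$, $s^\Phi_A(a)=\Phi(\alpha^A_a)(\eta^\Phi(x_0))$. *)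

From mathcomp Require Import ssreflect ssrfun ssrbool eqtype ssrnat fintype.

Set Implicit Arguments.
Unset Strict Implicit.
Unset Printing Implicit Defensive.

Record signature := Signature { op : Type; arity : op -> nat }.

Section UA.
Variable S : signature.

Record alg := Alg {
  car :> Type;
  interp : forall o : op S, ('I_(arity o) -> car) -> car }.
Arguments interp : clear implicits.

Inductive term (X : Type) : Type :=
| Var : X -> term X
| App : forall o : op S, ('I_(arity o) -> term X) -> term X.

Fixpoint eval (X : Type) (A : alg) (v : X -> car A) (t : term X) : car A :=
  match t with
  | Var x => v x
  | App o args => interp A o (fun k => @eval X A v (args k))
  end.

Record hom (A B : alg) := Hom {
  hfun :> car A -> car B;
  hmorph : forall o (args : 'I_(arity o) -> car A),
      hfun (interp A o args) = interp B o (fun k => hfun (args k)) }.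

Definition idhom (A : alg) : hom A A.
Proof. by exists (fun x => x). Defined.

Definition comphom (A B C : alg) (g : hom B C) (f : hom A B) : hom A C.
Proof.
exists (fun x => g (f x)) => o args.
by rewrite !hmorph.
Defined.

(** The variety V is given by a set E of identities (pairs of terms in
    countably many variables); an algebra is in V iff it satisfies E. *)
Definition satisfies (E : term nat -> term nat -> Prop) (A : alg) : Prop :=
  forall l r, E l r -> forall v : nat -> car A, eval v l = eval v r.

Definition free_on (E : term nat -> term nat -> Prop) (A : alg) (n : nat)
    (b : 'I_n -> car A) : Prop :=
  forall B : alg, satisfies E B ->
  forall g : 'I_n -> car B,
    exists h : hom A B, (forall k, h (b k) = g k) /\
      forall h' : hom A B, (forall k, h' (b k) = g k) -> forall x, h' x = h x.


Definition fg_free (E : term nat -> term nat -> Prop) (A : alg) : Prop :=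
  satisfies E A /\ exists (n : nat) (b : 'I_n -> car A), @free_on E A n b.

End UA.

Arguments Var {S X}.
Arguments App {S X}.
Arguments eval {S X} A v t.
Arguments satisfies {S} E A.
Arguments free_on {S} E A n b.
Arguments fg_free {S} E A.

(** A full subcategory of V-algebras is given by a family of algebras
    [A : I -> alg S] (its objects); its morphisms are all homomorphisms.
    An automorphism of this category (an isomorphism of categories onto
    itself): a functor which is bijective on objects and on each hom-set.
    Equality of morphisms is equality of the underlying maps. *)
Record cat_auto (S : signature) (I : Type) (A : I -> alg S) := CatAuto {
  ob : I -> I;
  ob_inv : I -> I;
  obK : cancel ob ob_inv;
  ob_invK : cancel ob_inv ob;
  mor : forall i j, hom (A i) (A j) -> hom (A (ob i)) (A (ob j));
  mor_id : forall i x, mor (idhom (A i)) x = x;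
  mor_comp : forall i j k (f : hom (A i) (A j)) (g : hom (A j) (A k)) x,
      mor (comphom g f) x = mor g (mor f x);
  mor_inj : forall i j (f g : hom (A i) (A j)),
      (forall x, mor f x = mor g x) -> forall x, f x = g x;
  mor_surj : forall i j (g : hom (A (ob i)) (A (ob j))),
      exists f : hom (A i) (A j), forall x, mor f x = g x }.

Arguments ob {S I A}.
Arguments ob_inv {S I A}.
Arguments ob_invK {S I A}.
Arguments mor {S I A} c {i j}.

Definition castA (S : signature) (I : Type) (A : I -> alg S) (i j : I)
    (e : i = j) (x : car (A i)) : car (A j) :=
  eq_rect i (fun k => car (A k)) x j e.

Arguments castA {S I} A {i j} e x.

Section MainFunction.
Variables (S : signature) (I : Type) (A : I -> alg S) (Phi : cat_auto A).
Variables (i0 : I) (x0 : car (A i0)).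
Variable eta0 : hom (A (ob_inv Phi i0)) (A i0).

(** [eta^Phi(x0)], where [eta^Phi = Phi(eta0) : A_0 -> Phi(A_0)]
    (here A_0 = Phi(Phi^{-1}(A_0)) up to the transport [castA]). *)
Definition eta_x0 : car (A (ob Phi i0)) :=
  mor Phi eta0 (castA A (esym (ob_invK Phi i0)) x0).

(** [alpha_hom h a] : h is alpha^B_a, i.e. the homomorphism A_0 -> B with
    x0 |-> a (unique, since A_0 is free on x0). *)
Definition is_alpha (B : alg S) (h : hom (A i0) B) (a : car B) : Prop :=
  h x0 = a.

(** Graph of the main function: [s^Phi_{A_i}(a) = y]
    iff [Phi(alpha_a)(eta^Phi(x0)) = y]. *)
Definition main_fun_graph (i : I) (a : car (A i)) (y : car (A (ob Phi i))) :
    Prop :=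
  exists h : hom (A i0) (A i), is_alpha h a /\ mor Phi h eta_x0 = y.

(** [t(u) = y] where [t(x0) = w \in A_0]: [t(u) := alpha^B_u (w)]. *)
Definition term_at (w : car (A i0)) (B : alg S) (u : car B) (y : car B) :
    Prop :=
  exists h : hom (A i0) B, is_alpha h u /\ h w = y.

End MainFunction.

Arguments eta_x0 {S I A} Phi i0 x0 eta0.
Arguments is_alpha {S I A i0} x0 {B} h a.
Arguments main_fun_graph {S I A} Phi i0 x0 eta0 {i} a y.
Arguments term_at {S I A i0} x0 w {B} u y.

(** The functor [Phi] maps the retraction [eta0 : Phi^-1(A_0) -> A_0] (split
    by [iota : x0 |-> q] with [eta0 q = x0]) to a retraction of [A_0] onto
    [Phi(A_0)].  Since [Phi] is full, every map [Phi(alpha_a)] then factors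
    through [Phi(iota)], so the values [Phi(alpha_a)(eta(x0))] are exactly the
    images of the single element [t(x0) := Phi(iota)(eta(x0))] of [A_0] under
    arbitrary homomorphisms, i.e. the values [t(u)].  Finding [q] needs care
    only when [Phi^-1(A_0)] is free on no generators: it is then initial, so
    [Phi] forces [A_0] to be trivial. *)

From Stdlib Require Import Setoid FunctionalExtensionality ProofIrrelevance.
From mathcomp Require Import ssreflect ssrfun ssrbool eqtype ssrnat fintype.

Set Implicit Arguments.
Unset Strict Implicit.
Unset Printing Implicit Defensive.

Lemma hom_ext (S : signature) (B C : alg S) (f g : hom B C) :
  (forall x, f x = g x) -> f = g.
Proof.
case: f g => [f fM] [g gM] /= /functional_extensionality efg; subst g.
by rewrite (proof_irrelevance _ fM gM).
Qed.

Section FreeAlgebras.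
Variables (S : signature) (E : term S nat -> term S nat -> Prop).

Lemma free_hom_unique (B C : alg S) (n : nat) (b : 'I_n -> car B) :
  free_on E B n b -> satisfies E C -> forall f g : hom B C,
  (forall k, f (b k) = g (b k)) -> forall x, f x = g x.
Proof.
move=> Bfree EC f g efg x.
have [h [_ h_uniq]] := Bfree C EC (fun k => g (b k)).
by rewrite (h_uniq f efg) (h_uniq g).
Qed.

Lemma fg_free_hom (B C : alg S) : fg_free E B -> satisfies E C ->
  car C -> inhabited (hom B C).
Proof.
move=> [_ [n [b Bfree]]] EC c.
by have [h _] := Bfree C EC (fun _ => c).
Qed.

Lemma free_on0_endo_id (B : alg S) (b : 'I_0 -> car B) :
  free_on E B 0 b -> satisfies E B -> forall (f : hom B B) x, f x = x.
Proof.
move=> Bfree EB f x.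
by rewrite (free_hom_unique Bfree EB (f := f) (g := idhom B)) // => -[].
Qed.

Lemma free_on1_trivial (B : alg S) (x0 : car B) :
  free_on E B 1 (fun _ => x0) -> satisfies E B ->
  (forall (f : hom B B) x, f x = x) -> forall a : car B, a = x0.
Proof.
move=> Bfree EB endo_id a.
have [alpha [alpha_x0 _]] := Bfree B EB (fun _ => a).
by rewrite -(alpha_x0 ord0) endo_id.
Qed.

End FreeAlgebras.

Section CategoryAutomorphism.
Variables (S : signature) (I : Type) (A : I -> alg S) (Phi : cat_auto A).

Lemma mor_id_pointwise (i : I) (f : hom (A i) (A i)) :
  (forall x, f x = x) -> forall z, mor Phi f z = z.
Proof.
by move=> f_id z; rewrite (hom_ext (f := f) (g := idhom _)) // mor_id.
Qed.

Lemma mor_cancel (i j : I) (f : hom (A i) (A j)) (g : hom (A j) (A i)) :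
  cancel f g -> cancel (mor Phi f) (mor Phi g).
Proof. by move=> fK z; rewrite -mor_comp mor_id_pointwise. Qed.

Lemma mor_endo_id (j : I) :
  (forall (f : hom (A j) (A j)) x, f x = x) ->
  forall (g : hom (A (ob Phi j)) (A (ob Phi j))) z, g z = z.
Proof.
move=> endo_id g z; have [f fg] := mor_surj g.
by rewrite -fg mor_id_pointwise.
Qed.

Lemma mor_orbit_retract (d j : I) (eta : hom (A d) (A j))
    (iota : hom (A j) (A d)) (iotaK : cancel iota eta)
    (e : car (A (ob Phi j))) (i : I) (y : car (A (ob Phi i))) :
  (exists h : hom (A j) (A i), mor Phi h e = y) <->
  (exists h : hom (A (ob Phi d)) (A (ob Phi i)), h (mor Phi iota e) = y).
Proof.
split=> [[h <-] | [h <-]].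
  by exists (comphom (mor Phi h) (mor Phi eta)); rewrite /= mor_cancel.
have [g gE] := mor_surj (comphom h (mor Phi iota)).
by exists g; rewrite gE.
Qed.

End CategoryAutomorphism.

Lemma hom_orbit_cast (S : signature) (I : Type) (A : I -> alg S) (j k : I)
    (p : j = k) (B : alg S) (z : car (A j)) (y : car B) :
  (exists h : hom (A k) B, h (castA A p z) = y) <->
  (exists h : hom (A j) B, h z = y).
Proof. by case: k / p. Qed.

Section MainFunction.
Variables (S : signature) (I : Type) (A : I -> alg S) (Phi : cat_auto A).
Variables (i0 : I) (x0 : car (A i0)).

Lemma ex_main_fun_graph (eta0 : hom (A (ob_inv Phi i0)) (A i0)) (i : I)
    (y : car (A (ob Phi i))) :
  (exists a : car (A i), main_fun_graph Phi i0 x0 eta0 a y) <->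
  (exists h : hom (A i0) (A i), mor Phi h (eta_x0 Phi i0 x0 eta0) = y).
Proof. by split=> [[a [h [_ hy]]] | [h hy]]; [exists h | exists (h x0), h]. Qed.

Lemma ex_term_at (w : car (A i0)) (B : alg S) (y : car B) :
  (exists u : car B, term_at x0 w u y) <-> (exists h : hom (A i0) B, h w = y).
Proof. by split=> [[u [h [_ hy]]] | [h hy]]; [exists h | exists (h x0), h]. Qed.

End MainFunction.

Section GeneratorPreimage.
Variables (S : signature) (E : term S nat -> term S nat -> Prop).
Variables (I : Type) (A : I -> alg S) (HC : forall i, fg_free E (A i)).
Variables (i0 : I) (x0 : car (A i0)) (HA0 : free_on E (A i0) 1 (fun _ => x0)).
Variables (Phi : cat_auto A) (n : nat).
Variables (bas : 'I_n -> car (A (ob_inv Phi i0))).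
Hypothesis Hbas : free_on E (A (ob_inv Phi i0)) n bas.
Variable eta0 : hom (A (ob_inv Phi i0)) (A i0).
Hypothesis Heta0 : forall k, eta0 (bas k) = x0.

Lemma free_monogenic_trivial_of_free0 :
  n = 0 -> forall a : car (A i0), a = x0.
Proof.
move=> n0; apply: free_on1_trivial HA0 (HC i0).1 _.
have := @mor_endo_id _ _ _ Phi (ob_inv Phi i0).
rewrite ob_invK; apply; move: bas Hbas; rewrite n0 => b bfree.
exact: free_on0_endo_id bfree (HC _).1.
Qed.

Lemma eta0_hits_generator : exists q, eta0 q = x0.
Proof.
case: (posnP n) => [n0 | n_gt0]; last by exists (bas (Ordinal n_gt0)).
(* A free algebra on no generators may be empty; [Phi] shows this one is not. *)
have [g] : inhabited (hom (A (ob Phi i0)) (A (ob Phi (ob_inv Phi i0)))).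
  apply: fg_free_hom (HC _) (HC _).1 _.
  exact (castA A (esym (ob_invK Phi i0)) x0).
have [f _] := mor_surj g.
by exists (f x0); apply: free_monogenic_trivial_of_free0.
Qed.

End GeneratorPreimage.

Theorem theorem2 (S : signature) (E : term S nat -> term S nat -> Prop)
  (I : Type) (A : I -> alg S)
  (HC : forall i, fg_free E (A i))
  (i0 : I) (x0 : car (A i0))
  (HA0 : free_on E (A i0) 1 (fun _ => x0))
  (Phi : cat_auto A)
  (n : nat) (bas : 'I_n -> car (A (ob_inv Phi i0)))
  (Hbas : free_on E (A (ob_inv Phi i0)) n bas)
  (eta0 : hom (A (ob_inv Phi i0)) (A i0))
  (Heta0 : forall k, eta0 (bas k) = x0)
  (Heta0_id : forall (e : ob_inv Phi i0 = i0) (x : car (A (ob_inv Phi i0))),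
      eta0 x = castA A e x) :
  exists w : car (A i0), forall (i : I) (y : car (A (ob Phi i))),
    (exists a : car (A i), main_fun_graph Phi i0 x0 eta0 a y) <->
    (exists u : car (A (ob Phi i)), term_at x0 w u y).
Proof.
have [q eta0q] := eta0_hits_generator HC HA0 Hbas Heta0.
have [iota [iota_x0 _]] := HA0 _ (HC (ob_inv Phi i0)).1 (fun _ => q).
have iotaK : cancel iota eta0.
  apply: (free_hom_unique HA0 (HC i0).1 (f := comphom eta0 iota)
    (g := idhom _)) => k.
  by rewrite /= iota_x0.
set e := eta_x0 Phi i0 x0 eta0.
exists (castA A (ob_invK Phi i0) (mor Phi iota e)) => i y.
rewrite ex_main_fun_graph ex_term_at hom_orbit_cast.
exact: mor_orbit_retract iotaK e i y.
Qed.
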